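(* For all $n,m\in\mathbb{N}$, \[ \sum_{j=0}^{n}\sum_{i=0}^{j}\frac{\binom{2n+3+m}{i}}{\binom{2n+1}{j}}=2^{m}(n+1)\left(H_{n+1}-\sum_{k=1}^{m}\frac{1}{2^{k-1}k}\left(\frac{\binom{2n+2+k}{n+1}}{\binom{2n+2}{n+1}}-1\right)\right). \]
   Context: $H_n=\sum_{k=1}^{n}\frac1k$ is the $n$-th harmonic number. Empty sums are $0$. *)

From HB Require Import structures.
From mathcomp Require Import all_boot all_order all_algebra.
Set Implicit Arguments. Unset Strict Implicit. Unset Printing Implicit Defensive.
Import Order.TTheory GRing.Theory Num.Theory.
Local Open Scope ring_scope.

Definition harmonic (n : nat) : rat := \sum_(1 <= k < n.+1) (k%:R)^-1.

From HB Require Import structures.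
From mathcomp Require Import all_boot all_order all_algebra.
From mathcomp Require Import ring zify.
Set Implicit Arguments. Unset Strict Implicit. Unset Printing Implicit Defensive.
Import Order.TTheory GRing.Theory Num.Theory.
Local Open Scope ring_scope.

(* Write S_A(j) = sum_{i<j} C(A,i) for the partial binomial sums and
     W(A, N, n) = sum_{j=0}^{n} S_A(j+1) / C(N,j),
   so that the left-hand side of the theorem is W(2n+3+m, 2n+1, n).
   The proof is a double induction.
   - Induction on m.  Pascal's rule gives S_{A+1}(j+1) = 2 S_A(j+1) - C(A,j),
     hence W(A+1) = 2 W(A) - sum_{j<=n} C(A,j)/C(N,j); the last sum telescopes,
     because (N+1-j) C(A,j)/C(N,j) increases by (A-N-1) C(A,j)/C(N,j) at each
     step.  This produces exactly the k = m+1 term of the right-hand side.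
   - Induction on n for the base case m = 0, i.e. W(2n+3, 2n+1, n) = (n+1) H_{n+1}.
     Applying Pascal's rule twice and summing by parts, W(N+4, N+2, K+1) is
     expressed through W(N+2, N, K), thanks to the three-term identity
       1/C(N+2,k) + 2/C(N+2,k+1) + 1/C(N+2,k+2) = (N+3) / ((N+1) C(N,k)).
     In the symmetric case N = 2n+1, K = n the boundary term equals 1, giving
     W(n+1) = (n+2)/(n+1) W(n) + 1, which is the recursion of (n+1) H_{n+1}. *)

Lemma bin_mid_sym n : 'C(2 * n + 1, n) = 'C(2 * n + 1, n.+1).
Proof.
have le_n : (n <= 2 * n + 1)%N by lia.
by rewrite -(bin_sub le_n); congr 'C(_, _); lia.
Qed.

Lemma bin_mid_double n : 'C(2 * n + 2, n.+1) = (2 * 'C(2 * n + 1, n.+1))%N.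
Proof.
have -> : (2 * n + 2 = (2 * n + 1).+1)%N by lia.
by rewrite binS bin_mid_sym; lia.
Qed.

Lemma bin_add2_products N k :
  [/\ ((N.+2 - k) * (N.+1 - k) * 'C(N.+2, k) = N.+2 * N.+1 * 'C(N, k))%N,
      (k.+1 * (N.+1 - k) * 'C(N.+2, k.+1) = N.+2 * N.+1 * 'C(N, k))%N
    & (k.+2 * k.+1 * 'C(N.+2, k.+2) = N.+2 * N.+1 * 'C(N, k))%N].
Proof.
have down2 := mul_bin_down N.+2 k; have down1 := mul_bin_down N.+1 k.
have diag2 := mul_bin_diag N.+2 k; have diag2S := mul_bin_diag N.+2 k.+1.
have diag1 := mul_bin_diag N.+1 k; rewrite /= in down2 down1 diag2 diag2S diag1.
split.
- by rewrite mulnAC -down2 -mulnA [(_ * (N.+1 - k))%N]mulnC -down1 mulnA.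
- by rewrite mulnAC -diag2 -mulnA [(_ * (N.+1 - k))%N]mulnC -down1 mulnA.
- by rewrite mulnAC -diag2S -mulnA [(_ * k.+1)%N]mulnC -diag1 mulnA.
Qed.

Section BinomialRatios.
Variable R : numFieldType.

Lemma natr_bin_neq0 N k : (k <= N)%N -> 'C(N, k)%:R != 0 :> R.
Proof. by move=> le_kN; rewrite pnatr_eq0 -lt0n bin_gt0. Qed.

Lemma bin_succ_ratio A k : 'C(A, k.+1)%:R = (A - k)%:R * 'C(A, k)%:R / k.+1%:R :> R.
Proof. by rewrite -natrM -mul_bin_left natrM mulrAC divff ?mul1r ?pnatr_eq0. Qed.

Lemma ratio_step N A k : (k < N)%N ->
  (N - k)%:R * 'C(A, k.+1)%:R / 'C(N, k.+1)%:R
  = (A - k)%:R * 'C(A, k)%:R / 'C(N, k)%:R :> R.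
Proof.
move=> lt_kN; rewrite !bin_succ_ratio; field.
by rewrite natr_bin_neq0 ?(ltnW lt_kN) // nat1r !pnatr_eq0 subn_eq0 -ltnNge.
Qed.

Lemma sum_bin_ratio N A k : (N.+1 < A)%N -> (k <= N)%N ->
  \sum_(0 <= j < k) 'C(A, j)%:R / 'C(N, j)%:R
  = ((N.+1 - k)%:R * 'C(A, k)%:R / 'C(N, k)%:R - N.+1%:R) / (A - N.+1)%:R :> R.
Proof.
move=> lt_NA le_kN; pose T j : R := (N.+1 - j)%:R * 'C(A, j)%:R / 'C(N, j)%:R.
have gap_neq0 : (A - N.+1)%:R != 0 :> R by rewrite pnatr_eq0 subn_eq0 -ltnNge.
rewrite (telescope_sumr_eq (fun j => T j / (A - N.+1)%:R)) //.
  by rewrite /T !bin0 subn0 divr1 mulr1 mulrBl.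
move=> j /andP[_ lt_jk]; have lt_jN : (j < N)%N by lia.
rewrite -mulrBl /T subSS ratio_step //.
have -> : (A - j = (N.+1 - j) + (A - N.+1))%N by lia.
by rewrite natrD; field; rewrite gap_neq0 natr_bin_neq0 // ltnW.
Qed.

(* The three-term identity for reciprocals of binomial coefficients: with
   P = (N+2)(N+1) C(N,k), the three reciprocals are a/P, b/P, c/P where
   a + 2b + c = (N+2)(N+3). *)
Lemma inv_bin_three_term N k : (k <= N)%N ->
  'C(N.+2, k)%:R^-1 + 2 * 'C(N.+2, k.+1)%:R^-1 + 'C(N.+2, k.+2)%:R^-1
  = N.+3%:R / (N.+1%:R * 'C(N, k)%:R) :> R.
Proof.
move=> le_kN; set P : R := (N.+2 * N.+1 * 'C(N, k))%N%:R.
have P_neq0 : P != 0 by rewrite /P pnatr_eq0 -lt0n !muln_gt0 bin_gt0 le_kN.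
have inv_of (c x : nat) : (x * c = N.+2 * N.+1 * 'C(N, k))%N -> c%:R^-1 = x%:R / P.
  move=> xcP; move: P_neq0; rewrite /P -xcP natrM mulf_eq0 negb_or => /andP[x0 c0].
  by field; rewrite x0 c0.
have [e0 e1 e2] := bin_add2_products N k.
have numer : ((N.+2 - k) * (N.+1 - k) + 2 * (k.+1 * (N.+1 - k)) + k.+2 * k.+1
              = N.+2 * N.+3)%N by nia.
rewrite (inv_of _ _ e0) (inv_of _ _ e1) (inv_of _ _ e2).
transitivity ((N.+2 * N.+3)%N%:R / P).
  by rewrite -numer !natrD !natrM; field; rewrite natr_bin_neq0 // nat1r -natrD !pnatr_eq0.
by rewrite /P !natrM; field; rewrite natr_bin_neq0 // nat1r -natrD !pnatr_eq0.
Qed.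
End BinomialRatios.

Section WeightedPartialSums.
Variable R : numFieldType.

Definition binsum (A j : nat) : R := \sum_(0 <= i < j) 'C(A, i)%:R.

Lemma binsum0 A : binsum A 0 = 0.
Proof. by rewrite /binsum big_geq. Qed.

Lemma binsumS A j : binsum A j.+1 = binsum A j + 'C(A, j)%:R.
Proof. by rewrite /binsum big_nat_recr. Qed.

Lemma binsum_pascal A j : binsum A.+1 j = binsum A j + binsum A j.-1.
Proof.
case: j => [|j] /=; first by rewrite !binsum0 addr0.
elim: j => [|j IH]; first by rewrite !binsumS !binsum0 !bin0 addr0.
by rewrite binsumS IH (binsumS A j.+1) binS natrD [binsum A j.+1]binsumS; ring.
Qed.

Lemma binsum_pascal2 A j :
  binsum A.+2 j.+1 = binsum A j.+1 + 2 * binsum A j + binsum A j.-1.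
Proof. by rewrite !binsum_pascal /=; case: j => [|j] /=; ring. Qed.

Definition wsum (A N n : nat) : R :=
  \sum_(0 <= j < n.+1) binsum A j.+1 / 'C(N, j)%:R.

Lemma wsum_succ_top A N n :
  wsum A.+1 N n = 2 * wsum A N n - \sum_(0 <= j < n.+1) 'C(A, j)%:R / 'C(N, j)%:R.
Proof.
rewrite /wsum mulr_sumr -sumrB; apply: eq_bigr => j _.
by rewrite binsum_pascal /= binsumS; ring.
Qed.

Lemma wsum_step_m n m :
  wsum (2 * n + 3 + m.+1) (2 * n + 1) n
  = 2 * wsum (2 * n + 3 + m) (2 * n + 1) n
    - 2 * n.+1%:R / m.+1%:R
      * ('C(2 * n + 2 + m.+1, n.+1)%:R / 'C(2 * n + 2, n.+1)%:R - 1).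
Proof.
rewrite addnS wsum_succ_top sum_bin_ratio; [|lia|lia].
have -> : (2 * n + 3 + m - (2 * n + 1).+1 = m.+1)%N by lia.
have -> : ((2 * n + 1).+1 - n.+1 = n.+1)%N by lia.
have -> : (2 * n + 3 + m = 2 * n + 2 + m.+1)%N by lia.
rewrite bin_mid_double natrM; field.
by rewrite natr_bin_neq0 ?nat1r ?pnatr_eq0 //; lia.
Qed.

Lemma sum_by_parts (a s : nat -> R) K : s 0%N = 0 ->
  \sum_(0 <= j < K.+1) a j * (s j.+1 + 2 * s j + s j.-1)
  = \sum_(0 <= k < K) (a k + 2 * a k.+1 + a k.+2) * s k.+1
    + a K * s K.+1 - a K.+1 * s K.
Proof.
move=> s0; elim: K => [|K IH]; first by rewrite big_nat1 big_geq //= s0; ring.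
by rewrite big_nat_recr //= IH big_nat_recr //=; ring.
Qed.

Lemma wsum_shift N K : (K <= N)%N ->
  wsum N.+4 N.+2 K.+1
  = N.+3%:R / N.+1%:R * wsum N.+2 N K
    + ('C(N.+2, K.+1)%:R^-1 * binsum N.+2 K.+2
       - 'C(N.+2, K.+2)%:R^-1 * binsum N.+2 K.+1).
Proof.
move=> le_KN; pose a j := 'C(N.+2, j)%:R^-1 : R.
transitivity (\sum_(0 <= j < K.+2) a j *
   (binsum N.+2 j.+1 + 2 * binsum N.+2 j + binsum N.+2 j.-1)).
  by apply: eq_bigr => j _; rewrite binsum_pascal2 mulrC.
rewrite sum_by_parts ?binsum0 // addrA; congr (_ + _ - _).
rewrite /wsum mulr_sumr; apply: eq_big_nat => k /andP[_ lt_kK].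
have le_kN : (k <= N)%N by lia.
by rewrite /a inv_bin_three_term // invfM; ring.
Qed.

Lemma wsum_step_n n :
  wsum (2 * n.+1 + 3) (2 * n.+1 + 1) n.+1
  = n.+2%:R / n.+1%:R * wsum (2 * n + 3) (2 * n + 1) n + 1.
Proof.
have -> : (2 * n.+1 + 3 = (2 * n + 1).+4)%N by lia.
have -> : (2 * n.+1 + 1 = (2 * n + 1).+2)%N by lia.
have -> : (2 * n + 3 = (2 * n + 1).+2)%N by lia.
rewrite wsum_shift; last by lia.
have -> : 'C((2 * n + 1).+2, n.+2) = 'C((2 * n + 1).+2, n.+1).
  by rewrite (_ : ((2 * n + 1).+2 = 2 * n.+1 + 1)%N) ?bin_mid_sym //; lia.
rewrite binsumS mulrDr addrAC subrr add0r mulVf ?natr_bin_neq0 //; last by lia.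
congr (_ * _ + _); have -> : ((2 * n + 1).+3 = 2 * n.+2)%N by lia.
have -> : ((2 * n + 1).+1 = 2 * n.+1)%N by lia.
by rewrite !natrM; field; rewrite nat1r pnatr_eq0.
Qed.
End WeightedPartialSums.

Arguments wsum {R}.

Lemma wsum_base n : wsum (2 * n + 3) (2 * n + 1) n = n.+1%:R * harmonic n.+1.
Proof.
elim: n => [|n IH].
  by rewrite /wsum /harmonic !big_nat1 binsumS binsum0 !bin0 add0r divr1.
rewrite wsum_step_n IH /harmonic [in RHS]big_nat_recr //=.
by field; rewrite -natrD nat1r !pnatr_eq0.
Qed.

Theorem mainTheorem7 (n m : nat) :
  \sum_(0 <= j < n.+1) \sum_(0 <= i < j.+1)
     ('C(2 * n + 3 + m, i)%:R / 'C(2 * n + 1, j)%:R : rat)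
  = 2 ^+ m * (n.+1)%:R *
    (harmonic n.+1
     - \sum_(1 <= k < m.+1)
         ((2 ^+ k.-1 * k%:R)^-1 *
          ('C(2 * n + 2 + k, n.+1)%:R / 'C(2 * n + 2, n.+1)%:R - 1))).
Proof.
have -> : \sum_(0 <= j < n.+1) \sum_(0 <= i < j.+1)
            ('C(2 * n + 3 + m, i)%:R / 'C(2 * n + 1, j)%:R : rat)
          = wsum (2 * n + 3 + m) (2 * n + 1) n.
  by apply: eq_bigr => j _; rewrite mulr_suml.
elim: m => [|m IH]; first by rewrite addn0 wsum_base big_geq // subr0 mul1r.
rewrite wsum_step_m IH [in RHS]big_nat_recr //= exprS.
by field; rewrite natr_bin_neq0 ?nat1r ?expf_neq0 ?pnatr_eq0 //; lia.
Qed.
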